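(* Let $q\in(0,1]$, $\eta\in(0,1]$, $m,m^*,m_0>0$ and $R>0$. Let $\Psi_T\in\mathrm{GL}(|\mathcal J^{(0)}|)$, $T\in\mathbb T$, be a deterministic sequence of positive matrices. Suppose that there is a constant $D>0$ such that $$P\bigl(\hat\theta_T^{(0)}\ne0\bigr)<D\bigl(\|a_T\|^{m\eta}+c_T(m_0,R)\bigr)\quad\text{for every }T\in\mathbb T,$$ and that [A13] holds: $\|\Psi_T\|^{m^*}\bigl(\|a_T\|^{m\eta}+c_T(m_0,R)\bigr)\to0$ as $T\to\infty$. Then $$E\bigl[|\Psi_T\hat\theta_T^{(0)}|^{m^*}\bigr]\to0\quad\text{as }T\to\infty.$$
   Context: Let $\Theta\subset\mathbb R^{\mathsf p}$ be a bounded open set with closure $\overline\Theta$ and $\theta^*\in\Theta$. Let $(\Omega,\mathcal F,P)$ be a probability space, $\mathbb T\subset\mathbb R_{\ge0}$ with $\sup\mathbb T=\infty$. For each $T\in\mathbb T$, $\mathbb H_T:\Omega\times\overline\Theta\to\mathbb R$ is a random field continuous in $\theta$ for every $\omega$. The penalty is $p_T(\theta)=\sum_{j=1}^{\mathsf p}\xi_T^jp(\theta_j)$ with (possibly random) $\xi_T^j>0$ and $p:\mathbb R\to\mathbb R_{\ge0}$, $p(0)=0$; $\mathbb H^\dagger_T=\mathbb H_T-p_T$, and $\hat\theta_T:\Omega\to\overline\Theta$ is measurable with $\mathbb H^\dagger_T(\hat\theta_T)=\max_{\overline\Theta}\mathbb H^\dagger_T$. $\mathcal J^{(0)}=\{j:\theta^*_j=0\}$,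 $\mathcal J^{(1)}=\{j:\theta^*_j\ne0\}$; $x^{(0)}=(x_j)_{j\in\mathcal J^{(0)}}$, $A^{(00)}=(A_{ij})_{i,j\in\mathcal J^{(0)}}$. $a_T=\mathrm{diag}(\alpha_T^1,\dots,\alpha_T^{\mathsf p})$ is deterministic, invertible, with $\|a_T\|\to0$ ($\|\cdot\|$ spectral norm); $\mathbb U_T=\{u:\theta^*+a_Tu\in\overline\Theta\}$. $\tilde a_T$ is diagonal with $(\tilde a_T)_{jj}=(\xi_T^j)^{-1/q}$ for $j\in\mathcal J^{(0)}$ and $\alpha_T^j$ for $j\in\mathcal J^{(1)}$; $G_T=a_T^{-1}\tilde a_T$. $\mathsf c_{T,R}=\sup\frac{|\mathbb H_T(\theta^*+a_Tu)-\mathbb H_T(\theta^*+a_Tv)|}{|u-v|^q}$ over $u,v\in\mathbb U_T$, $u\ne v$, $|a_Tu|,|a_Tv|<R\|a_T\|^{1-\eta}$; $c_T(m_0,R)=E[|\mathsf c_{T,R}|^{m_0}\|G_T^{(00)}\|^{qm_0}]$ (possibly $\infty$). *)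

From HB Require Import structures.
From mathcomp Require Import all_boot all_order all_algebra.
From mathcomp Require Import all_classical all_reals all_analysis.
Set Implicit Arguments. Unset Strict Implicit. Unset Printing Implicit Defensive.
Import Order.TTheory GRing.Theory Num.Theory.
Import numFieldNormedType.Exports.
Local Open Scope classical_set_scope.
Local Open Scope ring_scope.

Section Defs.
Variable R : realType.

Definition vnorm (m n : nat) (A : 'M[R]_(m, n)) : R :=
  Num.sqrt (\sum_(i < m) \sum_(j < n) A i j ^+ 2).

Definition opnorm (n : nat) (A : 'M[R]_n) : R :=
  sup [set vnorm (A *m x) | x in [set x : 'cV[R]_n | vnorm x <= 1]].

Definition posdef (n : nat) (A : 'M[R]_n) : Prop :=
  A^T = A /\ forall x : 'cV[R]_n, x != 0 -> 0 < (x^T *m A *m x) 0 0.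

Definition J0 (p : nat) (thstar : 'rV[R]_p) : {set 'I_p} :=
  [set j | thstar 0 j == 0].

Definition sub0 (p : nat) (thstar : 'rV[R]_p) (x : 'rV[R]_p)
  : 'rV[R]_#|J0 thstar| :=
  \row_(k < #|J0 thstar|) x 0 (enum_val k).

Definition ecvg0_along (TT : set R) (f : R -> \bar R) : Prop :=
  forall e : R, 0 < e -> exists T0 : R,
    forall T, TT T -> T0 <= T -> (`| f T | < e%:E)%E.

Definition rcvg0_along (TT : set R) (f : R -> R) : Prop :=
  forall e : R, 0 < e -> exists T0 : R,
    forall T, TT T -> T0 <= T -> `| f T | < e.

Definition aT (p : nat) (alpha : R -> 'rV[R]_p) (T : R) : 'M[R]_p :=
  diag_mx (alpha T).

Definition UT (p : nat) (Theta : set 'rV[R]_p) (thstar : 'rV[R]_p)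
  (alpha : R -> 'rV[R]_p) (T : R) : set 'rV[R]_p :=
  [set u | closure Theta (thstar + u *m aT alpha T)].

Definition adm_pair (p : nat) (Theta : set 'rV[R]_p) (thstar : 'rV[R]_p)
  (alpha : R -> 'rV[R]_p) (eta Rr T : R) (u v : 'rV[R]_p) : Prop :=
  [/\ UT Theta thstar alpha T u, UT Theta thstar alpha T v, u != v,
      vnorm (u *m aT alpha T) < Rr * (opnorm (aT alpha T)) `^ (1 - eta) &
      vnorm (v *m aT alpha T) < Rr * (opnorm (aT alpha T)) `^ (1 - eta)].

(* c_{T,R}(omega), as an extended real (possibly +oo);
   the sup of the empty family is taken to be 0 *)
Definition cTR (Omega : Type) (p : nat) (Theta : set 'rV[R]_p)
  (thstar : 'rV[R]_p) (alpha : R -> 'rV[R]_p) (H : R -> Omega -> 'rV[R]_p -> R)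
  (q eta Rr T : R) (w : Omega) : \bar R :=
  ereal_sup ([set 0%E] `|`
    [set r | exists u v, adm_pair Theta thstar alpha eta Rr T u v /\
       r = ((`| H T w (thstar + u *m aT alpha T) - H T w (thstar + v *m aT alpha T) |)
              / (vnorm (u - v)) `^ q)%:E]).

(* G_T^{(00)}: the J0-block of a_T^{-1} tilde a_T, i.e.
   diag( (alpha_T^j)^{-1} (xi_T^j)^{-1/q} )_{j in J0} *)
Definition G00 (Omega : Type) (p : nat) (thstar : 'rV[R]_p)
  (alpha : R -> 'rV[R]_p) (xi : R -> Omega -> 'rV[R]_p) (q T : R) (w : Omega)
  : 'M[R]_#|J0 thstar| :=
  diag_mx (\row_(k < #|J0 thstar|)
     ((alpha T 0 (enum_val k))^-1 * (xi T w 0 (enum_val k)) `^ (- q^-1))).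

Definition cT (d : measure_display) (Omega : measurableType d)
  (P : probability Omega R) (p : nat) (Theta : set 'rV[R]_p) (thstar : 'rV[R]_p)
  (alpha : R -> 'rV[R]_p) (xi : R -> Omega -> 'rV[R]_p)
  (H : R -> Omega -> 'rV[R]_p -> R) (q eta m0 Rr T : R) : \bar R :=
  (\int[P]_w (((`| cTR Theta thstar alpha H q eta Rr T w |) `^ m0)
       * ((opnorm (G00 thstar alpha xi q T w)) `^ (q * m0))%:E))%E.

End Defs.

(** On the event {θ̂_T^(0) = 0} the integrand vanishes, and elsewhere it is
    at most K ‖Ψ_T‖^{m*} for a constant K, because θ̂_T lies in the bounded
    set cl Θ. Hence E|Ψ_T θ̂_T^(0)|^{m*} ≤ K ‖Ψ_T‖^{m*} P(θ̂_T^(0) ≠ 0)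
    ≤ K D ‖Ψ_T‖^{m*} (‖a_T‖^{mη} + c_T(m_0,R)), which tends to 0 by [A13]. *)

From HB Require Import structures.
From mathcomp Require Import all_boot all_order all_algebra.
From mathcomp Require Import all_classical all_reals all_analysis.
From mathcomp Require Import lra.
Set Implicit Arguments. Unset Strict Implicit. Unset Printing Implicit Defensive.
Import Order.TTheory GRing.Theory Num.Theory.
Import numFieldNormedType.Exports.
Local Open Scope classical_set_scope.
Local Open Scope ring_scope.

Section matrix_norms.
Variable R : realType.

Lemma vnorm_ge0 m n (A : 'M[R]_(m, n)) : 0 <= vnorm A.
Proof. exact: sqrtr_ge0. Qed.

Lemma vnorm0 m n : vnorm (0 : 'M[R]_(m, n)) = 0.
Proof.
by rewrite /vnorm big1 ?sqrtr0 // => i _; rewrite big1 // => j _; rewrite mxE expr0n.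
Qed.

Lemma vnormZ m n (c : R) (A : 'M[R]_(m, n)) : vnorm (c *: A) = `|c| * vnorm A.
Proof.
rewrite /vnorm.
under eq_bigr => i _ do under eq_bigr => j _ do rewrite mxE exprMn.
under eq_bigr => i _ do rewrite -mulr_sumr.
by rewrite -mulr_sumr sqrtrM ?sqr_ge0 // sqrtr_sqr.
Qed.

Lemma normr_le_vnorm m n (A : 'M[R]_(m, n)) i j : `|A i j| <= vnorm A.
Proof.
rewrite /vnorm -sqrtr_sqr; apply: ler_wsqrtr.
have row_le : A i j ^+ 2 <= \sum_(j' < n) A i j' ^+ 2.
  by rewrite (bigD1 j) //= lerDl sumr_ge0 // => *; exact: sqr_ge0.
apply: (le_trans row_le).
by rewrite (bigD1 i) //= lerDl sumr_ge0 // => *; apply: sumr_ge0 => *; exact: sqr_ge0.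
Qed.

Lemma vnorm_le_entries m n (A : 'M[R]_(m, n)) b : 0 <= b ->
  (forall i j, `|A i j| <= b) -> vnorm A <= Num.sqrt (m * n)%:R * b.
Proof.
move=> b0 Ab; rewrite -(ger0_norm b0) -sqrtr_sqr -sqrtrM ?ler0n //.
apply: ler_wsqrtr.
have sqr_le i j : A i j ^+ 2 <= b ^+ 2.
  by rewrite -real_normK ?num_real // lerXn2r ?nnegrE ?normr_ge0.
apply: (le_trans (ler_sum _ (fun i _ => ler_sum _ (fun j _ => sqr_le i j)))).
by rewrite !sumr_const !card_ord -mulrnA mulr_natl mulnC.
Qed.

Lemma opnorm_set_ubound n (A : 'M[R]_n) :
  has_ubound [set vnorm (A *m x) | x in [set x : 'cV[R]_n | vnorm x <= 1]].
Proof.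
pose s := \sum_(i < n) \sum_(j < n) `|A i j|.
have s0 : 0 <= s by apply: sumr_ge0 => *; apply: sumr_ge0 => *.
exists (Num.sqrt (n * 1)%:R * s) => _ [x /= x1 <-].
apply: vnorm_le_entries => // i j.
rewrite mxE (le_trans (ler_norm_sum _ _ _)) //.
apply: (@le_trans _ _ (\sum_k `|A i k|)).
  apply: ler_sum => k _; rewrite normrM ler_piMr //.
  exact: le_trans (normr_le_vnorm x k j) x1.
by rewrite /s [leRHS](bigD1 i) //= lerDl sumr_ge0 // => *; exact: sumr_ge0.
Qed.

Lemma opnorm_ge0 n (A : 'M[R]_n) : 0 <= opnorm A.
Proof.
apply: (ub_le_sup (opnorm_set_ubound A)).
by exists 0; rewrite /= ?mulmx0 vnorm0.
Qed.

Lemma vnorm_mulmx_le n (A : 'M[R]_n) (x : 'cV[R]_n) (B : R) : 0 < B ->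
  vnorm x <= B -> vnorm (A *m x) <= opnorm A * B.
Proof.
move=> B0 xB.
have Bi0 : 0 <= B^-1 by rewrite invr_ge0 ltW.
have /(ub_le_sup (opnorm_set_ubound A)) : [set vnorm (A *m x) | x in
    [set x : 'cV[R]_n | vnorm x <= 1]] (vnorm (A *m (B^-1 *: x))).
  by exists (B^-1 *: x); rewrite //= vnormZ (ger0_norm Bi0) ler_pdivrMl // mulr1.
by rewrite -scalemxAr vnormZ (ger0_norm Bi0) ler_pdivrMl // mulrC.
Qed.

Lemma powR_vnorm_mulmx_le n (A : 'M[R]_n) (x : 'cV[R]_n) (B r : R) :
  0 < B -> 0 < r -> vnorm x <= B ->
  vnorm (A *m x) `^ r <= B `^ r * opnorm A `^ r * (x != 0)%:R.
Proof.
move=> B0 r0 xB; have [->|_] := eqVneq x 0.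
  by rewrite mulmx0 vnorm0 powR0 ?gt_eqF // mulr0.
rewrite mulr1 -powRM ?opnorm_ge0 ?(ltW B0) //.
apply: ge0_ler_powR; rewrite ?nnegrE ?vnorm_ge0 ?mulr_ge0 ?opnorm_ge0 ?(ltW r0) ?(ltW B0) //.
by rewrite mulrC vnorm_mulmx_le.
Qed.

Lemma closure_bounded_entry m n (S : set 'M[R]_(m, n)) M A i j :
  (forall B, S B -> vnorm B <= M) -> closure S A -> `|A i j| <= M + 1.
Proof.
move=> SM /(_ (ball A 1) (nbhsx_ballx _ _ ltr01)) [B [SB [_ AB]]].
have := AB i j; rewrite /ball /= => ABij.
have := normr_le_vnorm B i j; have := SM B SB.
have : `|A i j| <= `|A i j - B i j| + `|B i j|.
  by rewrite (le_trans _ (ler_normD _ _)) // subrK.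
lra.
Qed.

End matrix_norms.

(* The integral of a nonnegative function is a supremum over the simple
   functions below it, so monotonicity needs no measurability. *)
Lemma ge0_le_integral_nonmeasurable (R : realType) d (T : measurableType d)
    (mu : {measure set T -> \bar R}) (f g : T -> \bar R) :
  (forall x, (0 <= f x)%E) -> (forall x, (f x <= g x)%E) ->
  (\int[mu]_x f x <= \int[mu]_x g x)%E.
Proof.
move=> f0 fg.
have g0 x : (0 <= g x)%E by exact: le_trans (f0 x) (fg x).
rewrite !ge0_integralE // !patch_setT.
apply: ereal_sup_le => _ [h hf <-]; exists h => //= x.
exact: le_trans (hf x) (fg x).
Qed.

Lemma integral_le_indic (R : realType) d (T : measurableType d)
    (mu : {measure set T -> \bar R}) (S : set T) (c : R) (f : T -> R) :
  measurable S -> 0 <= c -> (forall x, 0 <= f x <= c * \1_S x) ->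
  (\int[mu]_x (f x)%:E <= c%:E * mu S)%E.
Proof.
move=> mS c0 fS.
apply: (@le_trans _ _ (\int[mu]_x (c * \1_S x)%:E)%E).
  by apply: ge0_le_integral_nonmeasurable => x; rewrite lee_fin; case/andP: (fS x).
rewrite (@integralZl_indic _ _ _ mu setT measurableT (fun _ => S)) //.
  by rewrite integral_indic ?setIT.
by rewrite ltNge c0.
Qed.

Lemma measurable_neq0_row (R : realType) d (T : measurableType d) n
    (g : T -> 'rV[R]_n) :
  (forall k, measurable_fun setT (fun w => g w 0 k)) ->
  measurable [set w | g w != 0].
Proof.
move=> mg.
have -> : [set w | g w != 0] = \bigcup_(k in [set: 'I_n]) [set w | g w 0 k != 0].
  apply/seteqP; split => w /=.
    move=> /eqP gw0; apply: contrapT => gw; apply: gw0; apply/rowP => k.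
    by rewrite mxE; apply: contrapT => gwk; apply: gw; exists k => //; exact/eqP.
  by move=> [k _]; apply: contraNneq => ->; rewrite mxE.
apply: fin_bigcup_measurable; first exact: finite_finset.
move=> k _; rewrite -[X in measurable X]setTI.
have -> : [set w | g w 0 k != 0] = (fun w => g w 0 k) @^-1` [set~ 0].
  by apply/seteqP; split => w /= /eqP.
exact: mg measurableT _ (measurableC (measurable_set1 0)).
Qed.

Lemma ecvg0_along_le (R : realType) (TT : set R) (f g : R -> \bar R) (c : R) :
  0 < c -> (forall T, TT T -> (0 <= g T <= c%:E * f T)%E) ->
  ecvg0_along TT f -> ecvg0_along TT g.
Proof.
move=> c0 gf f0 e e0.
have [T0 fT0] := f0 (e / c) (divr_gt0 e0 c0).
exists T0 => T TTT T0T; have /andP[g0 gcf] := gf T TTT.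
rewrite gee0_abs //; apply: (le_lt_trans gcf).
rewrite -[e](@divfK _ c) ?gt_eqF // mulrC EFinM lte_pmul2l ?lte_fin //.
exact: le_lt_trans (lee_abs _) (fT0 T TTT T0T).
Qed.

Theorem theorem8
  (R : realType) (d : measure_display) (Omega : measurableType d)
  (P : probability Omega R)
  (p : nat) (Theta : set 'rV[R]_p) (thstar : 'rV[R]_p)
  (TT : set R)
  (H : R -> Omega -> 'rV[R]_p -> R)
  (xi : R -> Omega -> 'rV[R]_p) (pen : R -> R)
  (thhat : R -> Omega -> 'rV[R]_p)
  (alpha : R -> 'rV[R]_p)
  (q eta m mstar m0 Rr D : R)
  (Psi : R -> 'M[R]_#|J0 thstar|)
  (* Theta: bounded open set, theta* in Theta *)
  (HThopen : open Theta)
  (HThbdd : exists M : R, forall th, Theta th -> vnorm th <= M)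
  (Hthstar : Theta thstar)
  (* index set TT in [0, oo) with sup TT = oo *)
  (HTTpos : forall T, TT T -> 0 <= T)
  (HTTunb : forall M : R, exists T, TT T /\ M < T)
  (* random fields H_T, continuous in theta on the closure of Theta *)
  (HHcont : forall T, TT T -> forall w, {within closure Theta, continuous (H T w)})
  (HHmeas : forall T, TT T -> forall th, closure Theta th ->
              measurable_fun setT (fun w => H T w th))
  (* penalty weights xi_T^j > 0 (possibly random) and penalty p *)
  (Hxipos : forall T w (j : 'I_p), 0 < xi T w 0 j)
  (Hximeas : forall T (j : 'I_p), measurable_fun setT (fun w => xi T w 0 j))
  (Hpen0 : pen 0 = 0) (Hpenpos : forall x, 0 <= pen x)
  (* hat theta_T : measurable maximizer of H_T - p_T on the closure of Theta *)
  (Hthhat_in : forall T, TT T -> forall w, closure Theta (thhat T w))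
  (Hthhat_meas : forall T, TT T -> forall j : 'I_p,
                   measurable_fun setT (fun w => thhat T w 0 j))
  (Hthhat_max : forall T, TT T -> forall w th, closure Theta th ->
      H T w th - \sum_(j < p) xi T w 0 j * pen (th 0 j)
      <= H T w (thhat T w) - \sum_(j < p) xi T w 0 j * pen (thhat T w 0 j))
  (* a_T = diag(alpha_T): deterministic, invertible, ||a_T|| -> 0 *)
  (Halpha : forall T (j : 'I_p), alpha T 0 j != 0)
  (Ha0 : rcvg0_along TT (fun T => opnorm (aT alpha T)))
  (* parameters *)
  (Hq : 0 < q <= 1) (Heta : 0 < eta <= 1)
  (Hm : 0 < m) (Hmstar : 0 < mstar) (Hm0 : 0 < m0) (HRr : 0 < Rr)
  (* Psi_T : deterministic positive invertible matrices *)
  (HPsi : forall T, TT T -> Psi T \in unitmx /\ posdef (Psi T))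
  (* P(hat theta_T^(0) <> 0) < D (||a_T||^{m eta} + c_T(m0, R)) *)
  (HD : 0 < D)
  (HPbound : forall T, TT T ->
     (P [set w | (sub0 thstar (thhat T w) != 0)%R]
      < D%:E * (((opnorm (aT alpha T)) `^ (m * eta))%:E
                + cT P Theta thstar alpha xi H q eta m0 Rr T))%E)
  (* [A13] *)
  (HA13 : ecvg0_along TT (fun T =>
     (((opnorm (Psi T)) `^ mstar)%:E
      * (((opnorm (aT alpha T)) `^ (m * eta))%:E
         + cT P Theta thstar alpha xi H q eta m0 Rr T))%E)) :
  ecvg0_along TT (fun T =>
    (\int[P]_w ((vnorm (Psi T *m (sub0 thstar (thhat T w))^T)) `^ mstar)%:E)%E).
Proof.
have [M ThM] := HThbdd.
have M1 : 0 <= M + 1 by have := le_trans (vnorm_ge0 thstar) (ThM _ Hthstar); lra.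
pose B := Num.sqrt (#|J0 thstar| * 1)%:R * (M + 1) + 1.
have B0 : 0 < B by rewrite ltr_wpDl ?mulr_ge0 ?sqrtr_ge0.
have thhat0_le T : TT T -> forall w, vnorm (sub0 thstar (thhat T w))^T <= B.
  move=> TTT w; apply: le_trans (vnorm_le_entries M1 _) _; last by rewrite lerDl.
  by move=> i j; rewrite !mxE (closure_bounded_entry _ _ ThM (Hthhat_in T TTT w)).
pose S T := [set w | sub0 thstar (thhat T w) != 0].
have mS T : TT T -> measurable (S T).
  move=> TTT; apply: measurable_neq0_row => k.
  have -> : (fun w => sub0 thstar (thhat T w) 0 k) = fun w => thhat T w 0 (enum_val k).
    by apply/funext => w; rewrite mxE.
  exact: Hthhat_meas.
pose K := B `^ mstar.
apply: (@ecvg0_along_le _ _ _ _ (K * D)) HA13; first by rewrite mulr_gt0 ?powR_gt0.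
move=> T TTT; rewrite integral_ge0 => [|w _]; last by rewrite lee_fin powR_ge0.
have o0 : 0 <= K * opnorm (Psi T) `^ mstar by rewrite mulr_ge0 ?powR_ge0.
apply: (le_trans (integral_le_indic _ (mS T TTT) o0 _)).
  move=> w; rewrite powR_ge0 indicE /=.
  have -> : (w \in S T) = (sub0 thstar (thhat T w) != 0) by apply/idP/idP => [/set_mem|/mem_set].
  by rewrite -trmx_eq0 powR_vnorm_mulmx_le ?thhat0_le.
apply: le_trans (lee_wpmul2l _ (ltW (HPbound T TTT))) _; first by rewrite lee_fin.
by rewrite !EFinM -!muleA (muleCA (opnorm (Psi T) `^ mstar)%:E).
Qed.
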